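(* Let $G$ be a graph with a length-function $\ell$ and let $T\subseteq G$ be a tree. If $T$ is $2$-geodesic in $G$, then $T$ is fully geodesic in $G$.
   Context: All graphs are finite; parallel edges are allowed, loops are not. A length-function on a graph $G$ is a map $\ell:E(G)\to\mathbb{R}^+$ (strictly positive reals); for a subgraph $H$ put $\ell(H)=\sum_{e\in E(H)}\ell(e)$, and subgraphs carry the restricted length-function. For $A\subseteq V(G)$, the Steiner distance $\mathrm{sd}_G(A)$ is the minimum of $\ell(S)$ over all connected subgraphs $S\subseteq G$ with $A\subseteq V(S)$ ($\infty$ if none exists). A subgraph $H\subseteq G$ is $k$-geodesic in $G$ if $\mathrm{sd}_H(A)=\mathrm{sd}_G(A)$ for every $A\subseteq V(H)$ with $|A|\le k$; it is fully geodesic in $G$ if it is $k$-geodesic for every $k\in\mathbb{N}$. *)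

From HB Require Import structures.
From mathcomp Require Import all_boot all_order all_algebra.
Set Implicit Arguments. Unset Strict Implicit. Unset Printing Implicit Defensive.
Import Order.TTheory GRing.Theory Num.Theory.
Local Open Scope ring_scope.

(* A finite multigraph G: vertex type V, edge type E (both finite); each edge
   e has two endpoints src e, tgt e (loops are excluded by a hypothesis
   src e != tgt e in the theorem). *)
Section Graphs.
Variables (V E : finType) (src tgt : E -> V).
Variable (R : realFieldType) (l : E -> R).

Definition sgraph := ({set V} * {set E})%type.

Definition joins (e : E) (x y : V) : bool :=
  ((src e == x) && (tgt e == y)) || ((src e == y) && (tgt e == x)).

Definition is_subgraph (S : sgraph) : bool :=
  [forall e in S.2, (src e \in S.1) && (tgt e \in S.1)].

Definition subg (S H : sgraph) : bool :=
  [&& is_subgraph S, S.1 \subset H.1 & S.2 \subset H.2].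

Definition adj (S : sgraph) : rel V := fun x y => [exists e in S.2, joins e x y].

Definition gconnected (S : sgraph) : bool :=
  [forall x in S.1, forall y in S.1, connect (adj S) x y].

(* a cycle in S: n >= 1 distinct edges f 0, ..., f (n-1) of S and n distinct
   vertices g 0, ..., g (n-1) such that f i joins g i and g (i+1 mod n). *)
Definition has_cycle (S : sgraph) : Prop :=
  exists n (f : 'I_n.+1 -> E) (g : 'I_n.+1 -> V),
    injective f /\ injective g /\
    forall i : 'I_n.+1, f i \in S.2 /\ joins (f i) (g i) (g (ordS i)).

Definition is_tree (T : sgraph) : Prop :=
  is_subgraph T /\ gconnected T /\ ~ has_cycle T.

Definition glen (S : sgraph) : R := \sum_(e in S.2) l e.

Definition omin (x : R) (o : option R) : option R :=
  match o with None => Some x | Some y => Some (Num.min x y) end.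

(* Steiner distance of A in H: minimum of glen S over connected subgraphs S
   of H containing A; None encodes infinity. *)
Definition sd (H : sgraph) (A : {set V}) : option R :=
  foldr omin None
    [seq glen X | X <- enum [pred X : sgraph | subg X H && gconnected X
                                              && (A \subset X.1)]].

Definition Gfull : sgraph := (setT, setT).

Definition k_geodesic (k : nat) (H : sgraph) : Prop :=
  forall A : {set V}, A \subset H.1 -> (#|A| <= k)%N -> sd H A = sd Gfull A.

Definition fully_geodesic (H : sgraph) : Prop := forall k, k_geodesic k H.

End Graphs.

(* Let S be a connected subgraph of G containing a nonempty A ⊆ V(T).  A
   depth-first traversal of S is a closed walk through every vertex of S using
   each edge at most twice; cutting it at its visits to A breaks it into pieces,
   connected subgraphs of S joining consecutive vertices of A.  Since T is
   2-geodesic, each piece can be traded for a subgraph of T that is no longer,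
   joins the same two vertices and is minimal with this property, so that each
   of its edges separates its two ends in the tree.  The union U of these
   subgraphs of T is connected and contains A.  Following the new closed walk,
   the side of T - e we are on changes an even number of times, and at least
   once if e is an edge of U; so every edge of U is used at least twice, and
   2 l(U) <= 2 l(S). *)

From Pilot Require Import Defs.
From HB Require Import structures.
From mathcomp Require Import all_boot all_order all_algebra.
From mathcomp Require Import zify.
Import Order.TTheory GRing.Theory Num.Theory.
Local Open Scope ring_scope.

Set Implicit Arguments.
Unset Strict Implicit.
Unset Printing Implicit Defensive.

Lemma connect_ind (T : finType) (r : rel T) (P : T -> Prop) a b :
  P a -> (forall z z', P z -> r z z' -> P z') -> connect r a b -> P b.
Proof.
move=> Pa Pr /connectP[p]; elim: p a Pa => [|z p IHp] a Pa /=; first by move=> _ ->.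
by case/andP=> raz pz eb; apply: (IHp z) => //; apply: Pr raz.
Qed.

Section Subgraphs.

Variables (V E : finType) (src tgt : E -> V).

Local Notation sgraph := (sgraph V E).
Local Notation joins := (joins src tgt).
Local Notation adj := (adj src tgt).
Local Notation is_subgraph := (is_subgraph src tgt).
Local Notation subg := (subg src tgt).
Local Notation gconnected := (gconnected src tgt).

Implicit Types (S X Y H : sgraph) (e f : E) (a b u v x y z : V).

Lemma joinsC e x y : joins e x y = joins e y x.
Proof. by rewrite /Defs.joins orbC. Qed.

Lemma joinsP e x y : joins e x y ->
  (src e = x /\ tgt e = y) \/ (src e = y /\ tgt e = x).
Proof. by case/orP=> /andP[/eqP-> /eqP->]; [left | right]. Qed.

Lemma joins_ends e : joins e (src e) (tgt e).
Proof. by rewrite /Defs.joins !eqxx. Qed.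

Lemma joins_inj e a b c d : joins e a b -> joins e c d ->
  (a = c /\ b = d) \/ (a = d /\ b = c).
Proof.
by case/joinsP=> -[<- <-] /joinsP[] [-> ->]; [left | right | right | left].
Qed.

Lemma adjC S : symmetric (adj S).
Proof.
by move=> x y; apply/existsP/existsP=> -[e /andP[eS je]]; exists e;
  rewrite eS joinsC.
Qed.

Lemma connectC S x y : connect (adj S) x y = connect (adj S) y x.
Proof. exact: sym_connect_sym (@adjC S) x y. Qed.

Lemma adjI S e x y : e \in S.2 -> joins e x y -> adj S x y.
Proof. by move=> eS je; apply/existsP; exists e; rewrite eS. Qed.

Lemma adjP S x y : reflect (exists2 e, e \in S.2 & joins e x y) (adj S x y).
Proof.
apply: (iffP existsP) => [[e /andP[]] | [e eS je]]; first by exists e.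
by exists e; rewrite eS.
Qed.

Lemma connect_subset_edges S S' x y : S.2 \subset S'.2 ->
  connect (adj S) x y -> connect (adj S') x y.
Proof.
move=> sub; apply: connect_sub => u v /adjP[e eS je].
exact/connect1/(adjI (subsetP sub e eS) je).
Qed.

Lemma is_subgraphP S e : is_subgraph S -> e \in S.2 -> src e \in S.1 /\ tgt e \in S.1.
Proof. by move=> /forallP/(_ e)/implyP sS /sS/andP. Qed.

Lemma is_subgraphI S :
  (forall e, e \in S.2 -> src e \in S.1 /\ tgt e \in S.1) -> is_subgraph S.
Proof. by move=> sS; apply/forallP=> e; apply/implyP=> /sS[-> ->]. Qed.

Lemma subgraph_connect_closed S x y : is_subgraph S -> x \in S.1 ->
  connect (adj S) x y -> y \in S.1.
Proof.
move=> sS xS; elim/connect_ind => // z z' _ /adjP[e eS].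
by case: (is_subgraphP sS eS) => ? ? /joinsP[[_ <-] | [<- _]].
Qed.

Lemma gconnectedP S : reflect
  (forall x y, x \in S.1 -> y \in S.1 -> connect (adj S) x y) (gconnected S).
Proof.
apply: (iffP forallP) => [cS x y xS yS | cS x].
  by move/implyP/(_ xS)/forallP/(_ y)/implyP: (cS x); apply.
by apply/implyP=> xS; apply/forallP=> y; apply/implyP; apply: cS.
Qed.

Lemma subgP X Y : reflect [/\ is_subgraph X, X.1 \subset Y.1 & X.2 \subset Y.2]
  (subg X Y).
Proof. exact: and3P. Qed.

Lemma subg_trans Y X Z : subg X Y -> subg Y Z -> subg X Z.
Proof.
move=> /subgP[sX XY1 XY2] /subgP[_ YZ1 YZ2]; apply/subgP.
by split; [| apply: subset_trans YZ1 | apply: subset_trans YZ2].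
Qed.

Lemma subg_refl S : is_subgraph S -> subg S S.
Proof. by move=> sS; apply/subgP; split. Qed.

Lemma subg_full S : is_subgraph S -> subg S (Gfull V E).
Proof. by move=> sS; apply/subgP; split=> //; apply: subsetT. Qed.

Definition del_edge S e : sgraph := (S.1, S.2 :\ e).

Definition component S a : sgraph :=
  ([set z | connect (adj S) a z], [set f in S.2 | connect (adj S) a (src f)]).

Definition gunion X Y : sgraph := (X.1 :|: Y.1, X.2 :|: Y.2).

Definition edge_graph e : sgraph := ([set src e; tgt e], [set e]).

Lemma subg_del_edge S e : is_subgraph S -> subg (del_edge S e) S.
Proof.
move=> sS; apply/subgP; split=> //=; last exact: subD1set.
by apply: is_subgraphI => f /setD1P[_]; apply: is_subgraphP.
Qed.

Lemma connect_component S a z :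
  connect (adj S) a z -> connect (adj (component S a)) a z.
Proof.
move=> caz; suff /andP[] : connect (adj S) a z && connect (adj (component S a)) a z by [].
elim/connect_ind: caz => [|u u' /andP[cu cu'] uu']; first by rewrite !connect0.
have /adjP[f fS jf] := uu'.
have au' := connect_trans cu (connect1 uu').
have fC : f \in (component S a).2.
  by rewrite inE fS; case/joinsP: jf => -[-> _].
by rewrite au' (connect_trans cu' (connect1 (adjI fC jf))).
Qed.

Lemma component_is_subgraph S a : is_subgraph (component S a).
Proof.
apply: is_subgraphI => f; rewrite !inE => /andP[fS caf]; split=> //.
exact: connect_trans caf (connect1 (adjI fS (joins_ends f))).
Qed.

Lemma component_root S a : a \in (component S a).1.
Proof. by rewrite inE connect0. Qed.

Lemma component_subg S a : is_subgraph S -> a \in S.1 -> subg (component S a) S.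
Proof.
move=> sS aS; apply/subgP; split; first exact: component_is_subgraph.
- by apply/subsetP=> z; rewrite inE; apply: subgraph_connect_closed.
- by apply/subsetP=> f; rewrite inE => /andP[].
Qed.

Lemma component_gconnected S a : gconnected (component S a).
Proof.
apply/gconnectedP=> x y; rewrite !inE => /connect_component ax /connect_component ay.
by rewrite connectC in ax; apply: connect_trans ax ay.
Qed.

Lemma connect_del_edge S e x : is_subgraph S -> gconnected S -> e \in S.2 -> x \in S.1 ->
  connect (adj (del_edge S e)) (src e) x || connect (adj (del_edge S e)) (tgt e) x.
Proof.
move=> sS /gconnectedP cS eS xS; have [srcS _] := is_subgraphP sS eS.
elim/connect_ind: (cS _ _ srcS xS) => [|z z' cz /adjP[f fS jf]].
  by rewrite connect0.
case: (eqVneq f e) jf => [-> | fe] jf.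
  by case/joinsP: jf => [[_ <-] | [<- _]]; rewrite connect0 ?orbT.
have zz' : adj (del_edge S e) z z' by apply: (adjI (e := f)) jf; rewrite !inE fe.
by case/orP: cz => cz; rewrite (connect_trans cz (connect1 zz')) ?orbT.
Qed.

Lemma gunion_subg X Y H : subg X H -> subg Y H -> subg (gunion X Y) H.
Proof.
move=> /subgP[sX XH1 XH2] /subgP[sY YH1 YH2]; apply/subgP; split=> /=;
  rewrite ?subUset ?XH1 ?XH2 //.
by apply: is_subgraphI => f; rewrite !inE => /orP[] /[dup] ? /is_subgraphP[] // -> ->;
  rewrite ?orbT.
Qed.

Lemma gunion_gconnected X Y z : gconnected X -> gconnected Y ->
  z \in X.1 -> z \in Y.1 -> gconnected (gunion X Y).
Proof.
move=> /gconnectedP cX /gconnectedP cY zX zY.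
have cz x : x \in (gunion X Y).1 -> connect (adj (gunion X Y)) z x.
  rewrite inE => /orP[] xS.
    exact: (connect_subset_edges (S' := gunion X Y) (subsetUl _ _) (cX _ _ zX xS)).
  exact: (connect_subset_edges (S' := gunion X Y) (subsetUr _ _) (cY _ _ zY xS)).
by apply/gconnectedP=> x y /cz zx /cz; apply: connect_trans; rewrite connectC.
Qed.

Lemma edge_graph_link S e a b : is_subgraph S -> e \in S.2 -> joins e a b ->
  [/\ subg (edge_graph e) S, gconnected (edge_graph e),
      a \in (edge_graph e).1 & b \in (edge_graph e).1].
Proof.
move=> sS eS jab; have [srcS tgtS] := is_subgraphP sS eS.
have st : adj (edge_graph e) (src e) (tgt e) by apply: (adjI (e := e)); rewrite ?inE ?joins_ends.
split.
- apply/subgP; split.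
  + by apply: is_subgraphI => f; rewrite inE => /eqP->; rewrite !inE !eqxx orbT.
  + by apply/subsetP=> z; rewrite !inE => /orP[] /eqP->.
  + by rewrite sub1set.
- apply/gconnectedP=> x y; rewrite !inE => /orP[] /eqP-> /orP[] /eqP->;
    rewrite ?connect0 ?(connect1 st) // connectC; exact: connect1.
- by case/joinsP: jab => [[<- _] | [_ <-]]; rewrite !inE eqxx ?orbT.
- by case/joinsP: jab => [[_ <-] | [<- _]]; rewrite !inE eqxx ?orbT.
Qed.

End Subgraphs.

Section Cycles.

Variables (V E : finType) (src tgt : E -> V).

Local Notation sgraph := (sgraph V E).
Local Notation joins := (joins src tgt).
Local Notation adj := (adj src tgt).

Implicit Types (S : sgraph) (e : E) (x : V) (p : seq V).

Lemma path_adj_edges S e0 x p : path (adj S) x p ->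
  exists h : nat -> E, forall i, (i < size p)%N ->
    h i \in S.2 /\ joins (h i) (nth x (x :: p) i) (nth x (x :: p) i.+1).
Proof.
move=> /(pathP x) pp.
exists (fun i => odflt e0 [pick f in S.2 | joins f (nth x (x :: p) i) (nth x (x :: p) i.+1)]).
move=> i /pp /adjP[f fS jf]; case: pickP => [f' /andP[] // | none].
by have := none f; rewrite fS jf.
Qed.

Lemma uniq_path_edges_inj x p (h : nat -> E) : uniq (x :: p) ->
  (forall i, (i < size p)%N -> joins (h i) (nth x (x :: p) i) (nth x (x :: p) i.+1)) ->
  {in gtn (size p) &, injective h}.
Proof.
move=> up jh i j ip jp hij.
have nth_inj m n : (m <= size p)%N -> (n <= size p)%N ->
    nth x (x :: p) m = nth x (x :: p) n -> m = n.
  by move=> mp np /eqP; rewrite nth_uniq //= ?ltnS // => /eqP.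
have ip' := ltnW ip; have jp' := ltnW jp.
have := jh j jp; rewrite -hij => /(joins_inj (jh i ip)).
case=> -[/nth_inj ij /nth_inj i1j1]; first exact: ij.
by have := ij ip' jp; have := i1j1 ip jp'; lia.
Qed.

Lemma path_cycle S e p : e \in S.2 -> path (adj (del_edge S e)) (tgt e) p ->
  uniq (tgt e :: p) -> last (tgt e) p = src e -> has_cycle src tgt S.
Proof.
move=> eS pp up lp; set vs := tgt e :: p.
have [h hP] := path_adj_edges e pp.
have hS i : (i < size p)%N -> h i \in S.2 /\ h i != e.
  by case/hP; rewrite !inE => /andP[]; split.
exists (size p), (fun i => if (i < size p)%N then h i else e), (fun i => nth (tgt e) vs i).
split; [| split].
- move=> i j /=; case: ltnP => ip; case: ltnP => jp.
  + by move/(uniq_path_edges_inj up (fun i ip => (hP i ip).2) ip jp)/val_inj.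
  + by move=> hij; have [_] := hS i ip; rewrite hij eqxx.
  + by move=> hij; have [_] := hS j jp; rewrite -hij eqxx.
  + by move=> _; apply: ord_inj; have := ltn_ord i; have := ltn_ord j; lia.
- by move=> i j /eqP; rewrite nth_uniq // => /eqP /ord_inj.
- move=> i /=; case: ltnP => ip.
  + by have [/setD1P[_]] := hP i ip; rewrite modn_small ?ltnS.
  + have -> : nat_of_ord i = size p by have := ltn_ord i; lia.
    by rewrite modnn /= -last_nth lp; split; last exact: joins_ends.
Qed.

Lemma acyclic_bridge S e : ~ has_cycle src tgt S -> e \in S.2 ->
  ~~ connect (adj (del_edge S e)) (tgt e) (src e).
Proof.
move=> acyc eS; apply/negP=> /connectP[p pp lp].
case: (shortenP pp) lp => q pq uq _ lq.
exact: acyc (path_cycle eS pq uq (esym lq)).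
Qed.

End Cycles.

Section Walks.

Variables (V E : finType) (src tgt : E -> V).

Local Notation sgraph := (sgraph V E).
Local Notation joins := (joins src tgt).
Local Notation adj := (adj src tgt).
Local Notation is_subgraph := (is_subgraph src tgt).
Local Notation subg := (subg src tgt).
Local Notation gconnected := (gconnected src tgt).
Local Notation component := (component src tgt).
Local Notation edge_graph := (edge_graph src tgt).

Implicit Types (S X Y H : sgraph) (A : {set V}) (e f : E) (a r u v x : V)
  (w : seq (sgraph * V)).

(* A walk is a list of stops [(Y_1, x_1); ...; (Y_n, x_n)] starting at x_0,
   where each piece Y_i is a connected subgraph through x_(i-1) and x_i;
   [uses e w] counts the pieces containing the edge e. *)
Definition links H Y u v : Prop := [/\ subg Y H, gconnected Y, u \in Y.1 & v \in Y.1].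

Fixpoint walk (P : sgraph -> V -> V -> Prop) x w : Prop :=
  if w is p :: w' then P p.1 x p.2 /\ walk P p.2 w' else True.

Definition walk_end x w : V := last x (map snd w).

Definition uses e w : nat := count (fun p : sgraph * V => e \in p.1.2) w.

Lemma walk_cat P x w1 w2 :
  walk P x (w1 ++ w2) <-> walk P x w1 /\ walk P (walk_end x w1) w2.
Proof.
elim: w1 x => [|p w1 IHw] x /=; first by split=> // -[].
by rewrite IHw; split=> [[? []] | [[? ?] ?]].
Qed.

Lemma walk_end_cat x w1 w2 : walk_end x (w1 ++ w2) = walk_end (walk_end x w1) w2.
Proof. by rewrite /walk_end map_cat last_cat. Qed.

Lemma walk_sub (P Q : sgraph -> V -> V -> Prop) x w :
  (forall Y u v, P Y u v -> Q Y u v) -> walk P x w -> walk Q x w.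
Proof. by move=> PQ; elim: w x => [|p w IHw] x //= [/PQ ? /IHw]. Qed.

Lemma walk_links_subg X H x w : subg X H -> walk (links X) x w -> walk (links H) x w.
Proof. by move=> XH; apply: walk_sub => Y u v [/subg_trans YH]; split; auto. Qed.

Lemma uses_cat e w1 w2 : uses e (w1 ++ w2) = (uses e w1 + uses e w2)%N.
Proof. exact: count_cat. Qed.

Lemma uses_outside H x w e : walk (links H) x w -> e \notin H.2 -> uses e w = 0%N.
Proof.
move=> + eH; elim: w x => [|[Y y] w IHw] x //= [[/subgP[_ _ YH] _ _ _] /IHw ->].
by rewrite addn0; apply/eqP; rewrite eqb0; apply: contra eH; apply: (subsetP YH).
Qed.

Definition connector H A X : bool := subg X H && gconnected X && (A \subset X.1).

Lemma links_connector H X x y : links H X x y <-> connector H [set x; y] X.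
Proof.
rewrite /connector subUset !sub1set.
by split=> [[-> -> -> ->] // | /andP[/andP[XH cX] /andP[xX yX]]].
Qed.

Lemma connector0 H : connector H set0 (set0, set0).
Proof.
rewrite /connector sub0set andbT; apply/andP; split.
  by apply/subgP; split; rewrite ?sub0set //; apply: is_subgraphI => ?; rewrite inE.
by apply/gconnectedP=> ? ?; rewrite inE.
Qed.

Lemma connector_full H A X : connector H A X -> connector (Gfull V E) A X.
Proof. by case/andP=> /andP[/subgP[sX _ _] cX] AX; rewrite /connector subg_full ?cX. Qed.

Definition tour S r w : Prop :=
  [/\ walk (links S) r w, walk_end r w = r,
      {subset S.1 <= r :: map snd w} & forall e, (uses e w <= 2)%N].

Lemma tour_nil S r : gconnected S -> r \in S.1 ->
  (forall e, e \in S.2 -> (src e != r) && (tgt e != r)) -> tour S r [::].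
Proof.
move=> /gconnectedP cS rS away; split=> // x xS; rewrite inE.
elim/connect_ind: (cS _ _ rS xS) => // z z' /eqP-> /adjP[f /away/andP[sf tf] jf].
by case/joinsP: jf => [[fr _] | [_ fr]]; [move: sf | move: tf]; rewrite fr eqxx.
Qed.

Section TourStep.

Variables (S : sgraph) (e : E) (r v : V).
Hypotheses (sS : is_subgraph S) (cS : gconnected S) (eS : e \in S.2) (jrv : joins e r v).

Let H := del_edge S e.

Let reach_r_or_v x : x \in S.1 -> connect (adj H) r x || connect (adj H) v x.
Proof.
move=> xS; have := connect_del_edge sS cS eS xS.
by case/joinsP: jrv => -[-> ->] //; rewrite orbC.
Qed.

Let rS : r \in S.1.
Proof. by case: (is_subgraphP sS eS); case/joinsP: jrv => -[-> ->]. Qed.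

Let vS : v \in S.1.
Proof. by case: (is_subgraphP sS eS); case/joinsP: jrv => -[-> ->]. Qed.

Let subg_component a : a \in S.1 -> subg (component H a) S.
Proof.
move=> aS; apply: subg_trans (subg_del_edge e sS).
by apply: component_subg => //; case/subgP: (subg_del_edge e sS).
Qed.

Lemma tour_bridge_free w : connect (adj H) r v ->
  tour (component H r) r w -> tour S r w.
Proof.
move=> crv [ww wend wcov wuses]; split=> //.
  exact: walk_links_subg (subg_component rS) ww.
move=> x /reach_r_or_v cx; apply: wcov; rewrite inE.
by case/orP: cx => // /(connect_trans crv).
Qed.

Lemma tour_bridge w w' : ~~ connect (adj H) r v ->
  tour (component H r) r w -> tour (component H v) v w' ->
  tour S r (w ++ (edge_graph e, v) :: w' ++ [:: (edge_graph e, r)]).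
Proof.
move=> nrv [ww wend wcov wuses] [ww' wend' wcov' wuses'].
have [eS' eC ? ?] := edge_graph_link sS eS jrv.
split.
- apply/walk_cat; split; first exact: walk_links_subg (subg_component rS) ww.
  rewrite wend /=; split; first by split.
  apply/walk_cat; split; first exact: walk_links_subg (subg_component vS) ww'.
  by rewrite wend' /=; split=> //; split.
- by rewrite !walk_end_cat wend /walk_end /= map_cat last_cat.
- move=> x /reach_r_or_v /orP[] cx.
    have := wcov x; rewrite inE cx => /(_ isT).
    by rewrite !inE map_cat mem_cat => /orP[-> | ->]; rewrite ?orbT.
  have := wcov' x; rewrite inE cx => /(_ isT).
  by rewrite !inE map_cat mem_cat /= !inE map_cat mem_cat => /orP[-> | ->]; rewrite !orbT.
- move=> f; rewrite uses_cat /= uses_cat /= !inE addn0.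
  have [-> | fe] := eqVneq f e.
    by rewrite (uses_outside ww) ?(uses_outside ww') //= !inE eqxx.
  rewrite add0n addn0.
  have [fr | fr] := boolP (f \in (component H r).2); last first.
    by rewrite (uses_outside ww fr) add0n.
  have fv : f \notin (component H v).2.
    apply: contra nrv; rewrite !inE in fr * => /andP[_ cvf].
    by case/andP: fr => _ /connect_trans; apply; rewrite connectC.
  by rewrite (uses_outside ww' fv) addn0.
Qed.

End TourStep.

Lemma exists_tour S r : is_subgraph S -> gconnected S -> r \in S.1 -> exists w, tour S r w.
Proof.
move: {2}#|S.2| (leqnn #|S.2|) => n; elim: n S r => [|n IHn] S r nS sS cS rS.
  exists [::]; apply: tour_nil => // e eS.
  by move: nS; rewrite leqn0 => /eqP/cards0_eq S0; rewrite S0 inE in eS.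
case: (pickP [pred e | (e \in S.2) && ((src e == r) || (tgt e == r))]) => [e | away];
  last first.
  by exists [::]; apply: tour_nil => // e eS; move/negbT: (away e); rewrite /= eS negb_or.
case/andP=> eS er; pose v := if src e == r then tgt e else src e.
have jrv : joins e r v.
  rewrite /v; case: eqP er => [<- _ | _ /= /eqP <-]; first exact: joins_ends.
  by rewrite joinsC joins_ends.
set H := del_edge S e.
have nC a : (#|(component H a).2| <= n)%N.
  rewrite -ltnS; apply: leq_trans nS; apply: proper_card; apply/properP; split.
    by apply/subsetP=> f; rewrite !inE => /andP[/andP[]].
  by exists e; rewrite // !inE eqxx.
have tour_component a : exists w, tour (component H a) a w.
  exact: IHn (nC a) (component_is_subgraph _ _ _ _) (component_gconnected _ _ _ _)
    (component_root _ _ _ _).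
have [w tw] := tour_component r.
have [crv | nrv] := boolP (connect (adj H) r v).
  by exists w; exact: (tour_bridge_free sS cS eS jrv crv tw).
have [w' tw'] := tour_component v.
by eexists; exact: (tour_bridge sS cS eS jrv nrv tw tw').
Qed.

(* Drop the stops outside A, merging each dropped stop's two pieces. *)
Lemma walk_restrict H A x w : walk (links H) x w -> walk_end x w \in A ->
  exists w', [/\ walk (links H) x w', all (fun p => p.2 \in A) w',
    walk_end x w' = walk_end x w, {subset [predI A & map snd w] <= x :: map snd w'}
    & forall e, (uses e w' <= uses e w)%N].
Proof.
move: {2}(size w) (leqnn (size w)) => n; elim: n x w => [|n IHn] x [|[Y y] w] //=;
  try by move=> *; exists [::]; split=> // z; rewrite !inE => /andP[].
rewrite ltnS => wn [[YH cY xY yY] ww] wA; have [yA | yA] := boolP (y \in A).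
  have [w' [ww' w'A w'end w'cov w'uses]] := IHn y w wn ww wA.
  exists ((Y, y) :: w'); split=> //=; first by rewrite yA.
    move=> z /andP[zA]; rewrite inE => /orP[/eqP-> | zw]; first by rewrite !inE eqxx orbT.
    by rewrite inE (w'cov z) ?orbT //; apply/andP.
  by move=> e; rewrite leq_add2l.
case: w wn ww wA => [|[Y' y'] w] wn ww wA; first by rewrite /walk_end /= wA in yA.
case: ww => [[Y'H cY' yY' y'Y'] ww].
have link : links H (gunion Y Y') x y'.
  split; [exact: gunion_subg | exact: gunion_gconnected yY yY' | |].
  - by rewrite inE xY.
  - by rewrite inE y'Y' orbT.
have [w' [ww' w'A w'end w'cov w'uses]] :=
  IHn x ((gunion Y Y', y') :: w) wn (conj link ww) wA.
exists w'; split=> //.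
  move=> z /andP[zA]; rewrite inE => /orP[/eqP zy | zw]; first by rewrite -zy zA in yA.
  exact/w'cov/andP.
move=> e; apply: leq_trans (w'uses e) _; rewrite /= inE addnA leq_add2r.
by case: (e \in Y.2); case: (e \in Y'.2).
Qed.

Fixpoint walk_union x w : sgraph :=
  if w is p :: w' then gunion p.1 (walk_union p.2 w') else ([set x], set0).

Lemma walk_union_links H x w : walk (links H) x w -> x \in H.1 ->
  [/\ subg (walk_union x w) H, gconnected (walk_union x w),
      x \in (walk_union x w).1 & {subset map snd w <= (walk_union x w).1}].
Proof.
elim: w x => [|[Y y] w IHw] x /=.
  move=> _ xH; split=> //; rewrite ?inE //.
    apply/subgP; split; rewrite ?sub1set ?sub0set //.
    by apply: is_subgraphI => f; rewrite inE.
  by apply/gconnectedP=> a b; rewrite !inE => /eqP-> /eqP->; apply: connect0.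
case=> [[YH cY xY yY] ww] xH; have /subgP[_ YH1 _] := YH.
have [UH cU yU wU] := IHw y ww (subsetP YH1 y yY).
split; [exact: gunion_subg | exact: gunion_gconnected yY yU | by rewrite inE xY |].
by move=> z; rewrite inE => /orP[/eqP-> | /wU zU]; rewrite inE ?yY ?zU ?orbT.
Qed.

Fixpoint switches (c : pred V) x w : nat :=
  if w is p :: w' then ((c x != c p.2) + switches c p.2 w')%N else 0%N.

Lemma odd_switches (c : pred V) x w : odd (switches c x w) = (c x != c (walk_end x w)).
Proof.
elim: w x => [|[Y y] w IHw] x /=; first by rewrite /walk_end /= eqxx.
by rewrite oddD IHw /walk_end /=; case: (c x); case: (c y); case: (c (last _ _)).
Qed.

Lemma switches_le_uses (P : sgraph -> V -> V -> Prop) (c : pred V) x w e : walk P x w ->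
  (forall Y u v, P Y u v -> e \notin Y.2 -> c u = c v) -> (switches c x w <= uses e w)%N.
Proof.
move=> + cP; elim: w x => [|[Y y] w IHw] x //= [PY /IHw ?]; apply: leq_add => //.
by case eY: (e \in Y.2); rewrite ?leq_b1 // (cP Y x y) ?eY ?eqxx.
Qed.

Lemma switches_gt0 (P : sgraph -> V -> V -> Prop) (c : pred V) x w e : walk P x w ->
  (forall Y u v, P Y u v -> e \in Y.2 -> c u != c v) ->
  e \in (walk_union x w).2 -> (0 < switches c x w)%N.
Proof.
move=> + cP; elim: w x => [|[Y y] w IHw] x //=; first by rewrite inE.
case=> PY /IHw wP; rewrite inE addn_gt0 => /orP[/(cP Y x y PY) -> // | /wP ->].
by rewrite orbT.
Qed.

End Walks.

Arguments links_connector {V E src tgt H X x y}.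

Lemma foldr_omin_min (R : realFieldType) (s : seq R) : s != [::] ->
  exists2 m, foldr (@omin R) None s = Some m & m \in s /\ forall y, y \in s -> m <= y.
Proof.
elim: s => [|x s IHs] // _ /=; have [-> | /IHs[m -> [ms mle]]] := eqVneq s [::].
  by exists x; split=> [|y]; rewrite ?inE // => /eqP->.
exists (Num.min x m) => //; split.
  by rewrite minEle !inE; case: ifP; rewrite ?eqxx ?ms ?orbT.
by move=> y; rewrite inE ge_min => /orP[/eqP-> | /mle->]; rewrite ?lexx ?orbT.
Qed.

Section Lengths.

Variables (V E : finType) (src tgt : E -> V) (R : realFieldType) (l : E -> R).
Hypothesis lpos : forall e, 0 < l e.

Local Notation sgraph := (sgraph V E).
Local Notation connector := (connector src tgt).
Local Notation glen := (glen l).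
Local Notation sd := (sd src tgt l).

Implicit Types (S X Y H U : sgraph) (A : {set V}) (w : seq (sgraph * V)).

Lemma glenE X : glen X = \sum_e (e \in X.2)%:R * l e.
Proof.
rewrite /Defs.glen big_mkcond; apply: eq_bigr => e _.
by case: (e \in X.2); rewrite ?mul1r ?mul0r.
Qed.

Lemma glen_ge0 X : 0 <= glen X.
Proof. by apply: sumr_ge0 => e _; apply: ltW. Qed.

Lemma glen_subset X Y : X.2 \subset Y.2 -> glen X <= glen Y.
Proof.
move=> XY; rewrite !glenE; apply: ler_sum => e _; apply: ler_wpM2r; first exact: ltW.
by case eX: (e \in X.2); rewrite ?ler0n // (subsetP XY e eX).
Qed.

Lemma glen_subsetD1 X Y e : e \in X.2 -> Y.2 \subset X.2 :\ e -> glen Y < glen X.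
Proof.
move=> eX YX; rewrite [glen X](big_setD1 _ eX) /=.
by apply: (le_lt_trans (glen_subset (Y := (X.1, X.2 :\ e)) YX)); rewrite ltrDr.
Qed.

Lemma glen_walk w : \sum_(p <- w) glen p.1 = \sum_e (uses e w)%:R * l e.
Proof.
elim: w => [|p w IHw]; first by rewrite big_nil big1 // => e _; rewrite mul0r.
rewrite big_cons IHw glenE -big_split; apply: eq_bigr => e _.
by rewrite /uses /= natrD mulrDl.
Qed.

Lemma glen_walk_le S w c : (forall e, (uses e w <= c * (e \in S.2))%N) ->
  \sum_(p <- w) glen p.1 <= c%:R * glen S.
Proof.
move=> wS; rewrite glen_walk glenE mulr_sumr; apply: ler_sum => e _.
by rewrite mulrA -natrM ler_wpM2r ?ler_nat // ltW.
Qed.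

Lemma glen_walk_ge U w c : (forall e, e \in U.2 -> (c <= uses e w)%N) ->
  c%:R * glen U <= \sum_(p <- w) glen p.1.
Proof.
move=> Uw; rewrite glen_walk glenE mulr_sumr; apply: ler_sum => e _.
rewrite mulrA -natrM ler_wpM2r ?ler_nat ?ltW //.
by case eU: (e \in U.2); rewrite ?muln0 // muln1 Uw.
Qed.

Lemma sd_minimizer H A X0 : connector H A X0 ->
  exists X, [/\ connector H A X, sd H A = Some (glen X)
                & forall Y, connector H A Y -> glen X <= glen Y].
Proof.
move=> X0c; set s := [seq glen X | X <- enum [pred X | connector H A X]].
have ins Y : connector H A Y -> glen Y \in s by move=> Yc; rewrite map_f ?mem_enum.
have /foldr_omin_min[m sdm [/mapP[X] + mX mle]] : s != [::] by apply: contraTneq (ins _ X0c) => ->.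
rewrite mem_enum => Xc; exists X; split=> //; first by rewrite -mX.
by move=> Y /ins; rewrite -mX; apply: mle.
Qed.

End Lengths.

Section Tree.

Variables (V E : finType) (src tgt : E -> V) (R : realFieldType) (l : E -> R).
Hypothesis lpos : forall e, 0 < l e.

Local Notation sgraph := (sgraph V E).
Local Notation adj := (adj src tgt).
Local Notation is_subgraph := (is_subgraph src tgt).
Local Notation gconnected := (gconnected src tgt).
Local Notation links := (links src tgt).
Local Notation component := (component src tgt).
Local Notation connector := (connector src tgt).
Local Notation glen := (glen l).

Variable T : sgraph.
Hypotheses (sT : is_subgraph T) (cT : gconnected T) (acT : ~ has_cycle src tgt T).

Implicit Types (S X Y H U : sgraph) (A : {set V}) (e : E) (u v x y z : V)
  (w : seq (sgraph * V)).

Definition separates e u v : bool := ~~ connect (adj (del_edge T e)) u v.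

Lemma minimal_link_separates X u v : links T X u v ->
  (forall Y, links T Y u v -> glen X <= glen Y) ->
  forall e, e \in X.2 -> separates e u v.
Proof.
move=> [XT cX uX vX] Xmin e eX; apply/negP=> cuv; have /subgP[sX _ XT2] := XT.
have XeT a b : connect (adj (del_edge X e)) a b -> connect (adj (del_edge T e)) a b.
  by apply: connect_subset_edges; apply: setSD.
have no_common a : a \in X.1 ->
    connect (adj (del_edge X e)) a u -> connect (adj (del_edge X e)) a v -> False.
  move=> aX au av; have XeX := subg_del_edge e sX; have /subgP[sXe _ _] := XeX.
  have /Xmin : links T (component (del_edge X e) a) u v.
    split; rewrite ?inE ?au ?av ?component_gconnected //.
    exact: subg_trans (component_subg sXe aX) (subg_trans XeX XT).
  apply/negP; rewrite -ltNge; apply: (glen_subsetD1 lpos eX).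
  by apply/subsetP=> f; rewrite inE => /andP[].
have [srcX tgtX] := is_subgraphP sX eX.
have bridge := acyclic_bridge acT (subsetP XT2 e eX).
have bridge' : separates e (src e) (tgt e) by rewrite /separates connectC.
case/orP: (connect_del_edge sX cX eX uX) => su; case/orP: (connect_del_edge sX cX eX vX) => sv.
- exact: no_common srcX su sv.
- case/negP: bridge'; apply: connect_trans (XeT _ _ su) (connect_trans cuv _).
  by rewrite connectC; apply: XeT.
- case/negP: bridge; apply: connect_trans (XeT _ _ su) (connect_trans cuv _).
  by rewrite connectC; apply: XeT.
- exact: no_common tgtX su sv.
Qed.

Definition tree_link X u v : Prop :=
  links T X u v /\ forall e, e \in X.2 -> separates e u v.

Definition side e : pred V := connect (adj (del_edge T e)) (src e).

Lemma side_link_eq Y u v e : tree_link Y u v -> e \notin Y.2 -> side e u = side e v.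
Proof.
move=> [[/subgP[_ _ YT] /gconnectedP cY uY vY] _] eY.
have cuv : connect (adj (del_edge T e)) u v.
  apply: (connect_subset_edges (S' := del_edge T e)) (cY _ _ uY vY); apply/subsetP=> f fY.
  by rewrite !inE (subsetP YT f fY) andbT; apply: contraNneq eY => <-.
rewrite /side; apply/idP/idP=> [/connect_trans -> // | /connect_trans]; apply.
by rewrite connectC.
Qed.

Lemma side_link_neq Y u v e : tree_link Y u v -> e \in Y.2 -> side e u != side e v.
Proof.
move=> [[/subgP[_ Y1 YT] _ uY vY] sep] eY; have eT := subsetP YT e eY.
apply: contraL (sep e eY); rewrite /separates negbK /side.
have := connect_del_edge sT cT eT (subsetP Y1 u uY).
have := connect_del_edge sT cT eT (subsetP Y1 v vY).
case su: (connect (adj (del_edge T e)) (src e) u) => /= cv cu /eqP sv.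
  by rewrite connectC in su; apply: connect_trans su _; rewrite -sv.
by rewrite -sv /= in cv; rewrite connectC in cu; apply: connect_trans cu cv.
Qed.

Lemma tree_walk_uses x w e : walk tree_link x w -> walk_end x w = x ->
  e \in (walk_union x w).2 -> (2 <= uses e w)%N.
Proof.
move=> ww wend eU.
have pos := switches_gt0 ww (fun Y u v Yuv => side_link_neq Yuv) eU.
have le := switches_le_uses (e := e) ww (fun Y u v Yuv => side_link_eq Yuv).
move: pos le (odd_switches (side e) x w); rewrite wend eqxx.
by case: (switches _ _ _) => [|[|n]] // _ le2 _; apply: leq_trans le2.
Qed.

Hypothesis T2 : k_geodesic src tgt l 2 T.

Lemma tree_link_le H Y x y : links H Y x y -> x \in T.1 -> y \in T.1 ->
  exists2 X, tree_link X x y & glen X <= glen Y.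
Proof.
move=> [/subgP[sY _ _] cY xY yY] xT yT.
have AT : [set x; y] \subset T.1 by rewrite subUset !sub1set xT yT.
have /(sd_minimizer l)[X [/links_connector XT sdX Xmin]] : connector T [set x; y] T.
  by apply/links_connector; split=> //; apply: subg_refl.
have /(sd_minimizer l)[S [_ sdS Smin]] : connector (Gfull V E) [set x; y] Y.
  by apply/links_connector; split=> //; apply: subg_full.
have XS : glen X = glen S.
  by have := T2 AT; rewrite cards2 ltnS leq_b1 sdX sdS => /(_ isT) [].
exists X; last by rewrite XS; apply/Smin/links_connector; split=> //; apply: subg_full.
split=> //; apply: minimal_link_separates => // Y' /links_connector; exact: Xmin.
Qed.

Lemma walk_to_tree H x w : x \in T.1 -> all (fun p => p.2 \in T.1) w ->
  walk (links H) x w -> exists wT, [/\ walk tree_link x wT, map snd wT = map snd w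
    & \sum_(p <- wT) glen p.1 <= \sum_(p <- w) glen p.1].
Proof.
elim: w x => [|[Y y] w IHw] x xT /=; first by exists [::].
case/andP=> yT wT [Yxy ww]; have [X Xxy XY] := tree_link_le Yxy xT yT.
have [wX [wwX wXw wXle]] := IHw y yT wT ww.
by exists ((X, y) :: wX); rewrite /= wXw !big_cons; split=> //; apply: lerD.
Qed.

Lemma tree_connector_le A S : A \subset T.1 -> connector (Gfull V E) A S ->
  exists2 U, connector T A U & glen U <= glen S.
Proof.
move=> AT /andP[/andP[/subgP[sS _ _] cS] AS]; have [-> | [r rA]] := set_0Vmem A.
  by exists (set0, set0); rewrite ?connector0 // /Defs.glen big_set0 glen_ge0.
have rT := subsetP AT r rA.
have [w [ww wend wcov wuses]] := exists_tour sS cS (subsetP AS r rA).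
have wA : walk_end r w \in A by rewrite wend.
have [w1 [ww1 w1A w1end w1cov w1uses]] := walk_restrict ww wA.
have w1T : all (fun p => p.2 \in T.1) w1.
  by apply/allP=> p /(allP w1A); apply: (subsetP AT).
have [wT [wwT wTw wTle]] := walk_to_tree rT w1T ww1.
set U := walk_union r wT.
have [UT cU rU wTU] := walk_union_links (walk_sub (fun Y u v (h : tree_link Y u v) => h.1) wwT) rT.
exists U.
  rewrite /connector UT cU; apply/subsetP=> a aA.
  have := wcov a (subsetP AS a aA); rewrite inE => /orP[/eqP-> // | aw].
  have := w1cov a; rewrite inE /= aA aw -wTw => /(_ isT) /orP[/eqP-> // | /wTU //].
have wTend : walk_end r wT = r by rewrite /walk_end wTw -/(walk_end r w1) w1end wend.
have le2S : \sum_(p <- w1) glen p.1 <= 2%:R * glen S.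
  apply: (glen_walk_le lpos) => e; case eS: (e \in S.2); last by rewrite (uses_outside ww1) ?eS.
  by rewrite muln1; apply: leq_trans (w1uses e) (wuses e).
have ge2U : 2%:R * glen U <= \sum_(p <- wT) glen p.1.
  by apply: (glen_walk_ge lpos) => e; apply: tree_walk_uses.
by rewrite -(ler_pM2l (ltr0Sn _ 1)); apply: le_trans ge2U (le_trans wTle le2S).
Qed.

Lemma sd_tree A : A \subset T.1 -> sd src tgt l T A = sd src tgt l (Gfull V E) A.
Proof.
move=> AT.
have TT : connector T A T by rewrite /connector subg_refl ?cT.
have TG := connector_full TT.
have [X [XT -> Xmin]] := sd_minimizer l TT.
have [S [SG -> Smin]] := sd_minimizer l TG.
congr Some; apply/le_anti/andP; split.
  by have [U /Xmin XU US] := tree_connector_le AT SG; apply: le_trans XU US.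
exact: Smin (connector_full XT).
Qed.

End Tree.

Theorem theorem1 (V E : finType) (src tgt : E -> V)
  (noloop : forall e : E, src e != tgt e)
  (R : realFieldType) (l : E -> R) (lpos : forall e : E, 0 < l e)
  (T : sgraph V E) (Ttree : is_tree src tgt T) :
  k_geodesic src tgt l 2 T -> fully_geodesic src tgt l T.
Proof.
move=> T2 k A AT _; case: Ttree => sT [cT acT].
exact: (sd_tree lpos sT cT acT T2 AT).
Qed.
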